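(* For every integer $n>1$, $\mathrm{Log}_{>1}(\mathbb{R})\not\subseteq \mathrm{Log}_{>1}(\mathbb{R}^n)$.
   Context: Modal formulas are built from a countable set of propositional variables using $\bot$, $\to$ and one unary modality $\lozenge$; $\Box\varphi$ abbreviates $\neg\lozenge\neg\varphi$. A frame is a pair $(X,R)$ with $R\subseteq X\times X$; a valuation assigns to each variable a subset of $X$; truth is defined as usual, with $x\models\lozenge\varphi$ iff there is $y$ with $xRy$ and $y\models\varphi$. A formula is valid in a frame if it is true at every point under every valuation. For a metric space $(X,d)$, the farness frame is $(X,R_{>1})$ where $x R_{>1} y$ iff $d(x,y)>1$, and $\mathrm{Log}_{>1}(X)$ denotes the set of modal formulas valid in this frame. $\mathbb{R}^n$ carries the Euclidean metric. *)

From HB Require Import structures.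
From mathcomp Require Import all_boot all_order all_algebra.
From mathcomp Require Import Rstruct.
From Stdlib Require Import Reals.

Set Implicit Arguments.
Unset Strict Implicit.
Unset Printing Implicit Defensive.

Import Order.TTheory GRing.Theory Num.Theory.

Inductive mform : Type :=
  | Var : nat -> mform
  | Bot : mform
  | Imp : mform -> mform -> mform
  | Dia : mform -> mform.

Definition Neg (p : mform) : mform := Imp p Bot.
Definition Box (p : mform) : mform := Neg (Dia (Neg p)).

Fixpoint sat (X : Type) (Rel : X -> X -> Prop) (V : nat -> X -> Prop)
    (x : X) (p : mform) : Prop :=
  match p with
  | Var k => V k x
  | Bot => False
  | Imp p q => sat Rel V x p -> sat Rel V x q
  | Dia p => exists y, Rel x y /\ sat Rel V y p
  end.

Definition valid_in_frame (X : Type) (Rel : X -> X -> Prop) (p : mform) : Prop :=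
  forall (V : nat -> X -> Prop) (x : X), sat Rel V x p.

Local Open Scope ring_scope.

Definition far_rel (X : Type) (d : X -> X -> R) : X -> X -> Prop :=
  fun x y => 1 < d x y.

Definition Log_far (X : Type) (d : X -> X -> R) : mform -> Prop :=
  fun p => valid_in_frame (far_rel d) p.

Definition dist_R (x y : R) : R := `|x - y|.

Definition Rn (n : nat) : Type := 'I_n -> R.

Definition dist_Rn (n : nat) (x y : Rn n) : R :=
  Num.sqrt (\sum_(i < n) (x i - y i) ^+ 2).

(** The formula [square_formula] says, on frames in which any point reaches
    any other in two steps, that there are no four points a, b, c, d with the
    "diagonals" ac and bd far while the "sides" ab, bc, cd, da are not.
    On the line such a configuration is impossible: if a and c are more than 1
    apart, then b and d both lie within 1 of each and are squeezed into an
    interval of length less than 1.  In the plane (and so in R^n, n >= 2) the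
    unit square is such a configuration, since its diagonals have length
    sqrt 2 > 1. *)

From mathcomp Require Import all_boot all_order all_algebra.
From mathcomp Require Import Rstruct.
From Stdlib Require Import Reals.
From Stdlib Require Import Classical.
From mathcomp Require Import lra.

Set Implicit Arguments.
Unset Strict Implicit.

Import Order.TTheory GRing.Theory Num.Theory.
Local Open Scope ring_scope.

Definition square_formula : mform :=
  let a := Var 0 in let b := Var 1 in let c := Var 2 in let d := Var 3 in
  let always p := Box (Box p) in
  Imp (always (Imp a (Box (Neg b))))
  (Imp (always (Imp b (Box (Neg c))))
  (Imp (always (Imp c (Box (Neg d))))
  (Imp (always (Imp d (Box (Neg a))))
  (Imp (always (Imp a (Dia c)))
  (Imp (always (Imp b (Dia d)))
  (Imp (Dia (Dia a))
  (Imp (Dia (Dia b)) Bot))))))).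

Section Frame.

Variables (X : Type) (Rel : X -> X -> Prop).

Definition reach2 (x y : X) : Prop := exists z, Rel x z /\ Rel z y.

Definition square (a b c d : X) : Prop :=
  [/\ Rel a c, Rel b d & [/\ ~ Rel a b, ~ Rel b c, ~ Rel c d & ~ Rel d a]].

Lemma sat_Box (V : nat -> X -> Prop) (x : X) (p : mform) :
  sat Rel V x (Box p) <-> forall y, Rel x y -> sat Rel V y p.
Proof.
split=> [Hx y xy | Hx [y [xy Hy]]]; last exact: Hy (Hx y xy).
by apply: NNPP => Hy; apply: Hx; exists y.
Qed.

Hypothesis reach2_total : forall x y, reach2 x y.

Lemma sat_BoxBox (V : nat -> X -> Prop) (x : X) (p : mform) :
  sat Rel V x (Box (Box p)) <-> forall y, sat Rel V y p.
Proof.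
split=> [Hx y | Hp].
  have [z [xz zy]] := reach2_total x y.
  by move/sat_Box/(_ z xz)/sat_Box: Hx; apply.
by apply/sat_Box => z _; apply/sat_Box.
Qed.

Lemma valid_square_formula :
  valid_in_frame Rel square_formula <-> ~ exists a b c d, square a b c d.
Proof.
split=> [Hvalid [a [b [c [d [ac bd [nab nbc ncd nda]]]]]] | Hfree V x].
  pose pts k := match k with 0%N => a | 1%N => b | 2%N => c | _ => d end.
  pose V k y := y = pts k.
  have far_from k u : ~ Rel u (pts k) -> sat Rel V u (Box (Neg (Var k))).
    by move=> nuk; apply/sat_Box => w uw /= wk; apply: nuk; rewrite -wk.
  have [z1 [az1 z1a]] := reach2_total a a; have [z2 [az2 z2b]] := reach2_total a b.
  have := Hvalid V a; cbn [square_formula sat]; rewrite !sat_BoxBox; apply.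
  - by move=> y ->; apply: (far_from 1%N).
  - by move=> y ->; apply: (far_from 2%N).
  - by move=> y ->; apply: (far_from 3%N).
  - by move=> y ->; apply: (far_from 0%N).
  - by move=> y ->; exists c.
  - by move=> y ->; exists d.
  - by exists z1; split => //; exists a.
  - by exists z2; split => //; exists b.
have side k l u w : (forall y, sat Rel V y (Imp (Var k) (Box (Neg (Var l))))) ->
    V k u -> V l w -> ~ Rel u w.
  move=> H Vu Vw uw; have Hu : sat Rel V u (Box (Neg (Var l))) := H u Vu.
  exact: (sat_Box _ _ _).1 Hu w uw Vw.
cbn [square_formula sat]; rewrite !sat_BoxBox.
move=> ab bc cd da a_c b_d [_ [_ [a [_ Va]]]] [_ [_ [b [_ Vb]]]].
have [c [ac Vc]] := a_c a Va; have [d [bd Vd]] := b_d b Vb.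
apply: Hfree; exists a, b, c, d; split => //; split.
- exact: side ab Va Vb.
- exact: side bc Vb Vc.
- exact: side cd Vc Vd.
- exact: side da Vd Va.
Qed.

End Frame.

Lemma reach2_far_line (F : realFieldType) (x y : F) :
  exists z, 1 < `|x - z| /\ 1 < `|z - y|.
Proof.
exists (`|x| + `|y| + 2).
have := ler_norm x; have := ler_norm (- x); have := ler_norm y; have := ler_norm (- y).
by rewrite !normrN !ltr_normr => *; split; apply/orP; [right | left]; lra.
Qed.

Lemma far_diagonal_line (F : realFieldType) (a b c d : F) :
  `|a - b| <= 1 -> `|b - c| <= 1 -> `|c - d| <= 1 -> `|d - a| <= 1 ->
  1 < `|a - c| -> `|b - d| <= 1.
Proof.
rewrite !ler_norml ltr_normr => /andP[? ?] /andP[? ?] /andP[? ?] /andP[? ?].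
by case/orP => ?; apply/andP; split; lra.
Qed.

Lemma reach2_far_R (x y : R) : reach2 (far_rel dist_R) x y.
Proof. exact: reach2_far_line. Qed.

Lemma square_free_far_R : ~ exists a b c d, square (far_rel dist_R) a b c d.
Proof.
rewrite /far_rel /dist_R => -[a [b [c [d [ac bd [nab nbc ncd nda]]]]]].
have near (u v : R) : ~ 1 < `|u - v| -> `|u - v| <= 1 by move=> /negP; rewrite leNgt.
by move: bd; rewrite ltNge (@far_diagonal_line _ a b c d) ?near.
Qed.

Lemma sqrtr_gt1 (F : rcfType) (a : F) : (1 < Num.sqrt a) = (1 < a).
Proof.
have [a_le0 | a_gt0] := lerP a 0; last by rewrite -{1}sqrtr1 ltr_sqrt.
by rewrite ler0_sqrtr // ltr10; apply/esym/negbTE; rewrite -leNgt (le_trans a_le0).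
Qed.

Lemma ler_dist_Rn n (x y : Rn n) (i : 'I_n) : `|x i - y i| <= dist_Rn x y.
Proof.
rewrite /dist_Rn -sqrtr_sqr ler_wsqrtr // (bigD1 i) //= lerDl.
by apply: sumr_ge0 => j _; apply: sqr_ge0.
Qed.

Lemma reach2_far_Rn n (i : 'I_n) (x y : Rn n) : reach2 (far_rel (@dist_Rn n)) x y.
Proof.
have [z [xz zy]] := reach2_far_line (x i) (y i).
pose w : Rn n := fun j => if j == i then z else x j.
exists w; split; rewrite /far_rel.
- by apply: lt_le_trans (ler_dist_Rn x w i); rewrite /w eqxx.
- by apply: lt_le_trans (ler_dist_Rn w y i); rewrite /w eqxx.
Qed.

Section Plane.

Variable m : nat.

Definition plane_pt (u v : R) : Rn m.+2 :=
  fun i => if val i == 0%N then u else if val i == 1%N then v else 0.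

(* Without this, numerals passed to [plane_pt] would be read in Stdlib's [R_scope]. *)
Arguments plane_pt (u v)%_ring_scope.

Lemma dist_plane_pt (u v u' v' : R) :
  dist_Rn (plane_pt u v) (plane_pt u' v') = Num.sqrt ((u - u') ^+ 2 + (v - v') ^+ 2).
Proof.
rewrite /dist_Rn !big_ord_recl big1 ?addr0 // => i _.
by rewrite /plane_pt /= subrr expr0n.
Qed.

Lemma far_plane_pt (u v u' v' : R) :
  far_rel (@dist_Rn m.+2) (plane_pt u v) (plane_pt u' v') <->
  1 < (u - u') ^+ 2 + (v - v') ^+ 2.
Proof. by rewrite /far_rel dist_plane_pt sqrtr_gt1. Qed.

Lemma square_far_Rn :
  square (far_rel (@dist_Rn m.+2)) (plane_pt 0 0) (plane_pt 1 0) (plane_pt 1 1) (plane_pt 0 1).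
Proof. by split; [| | split]; rewrite far_plane_pt; lra. Qed.

End Plane.

Local Close Scope ring_scope.

Theorem proposition3p1 (n : nat) (hn : (1 < n)%N) :
  ~ (forall p : mform, Log_far dist_R p -> Log_far (@dist_Rn n) p).
Proof.
case: n hn => [|[|m]] // _ H.
have valid_R : Log_far dist_R square_formula.
  exact/(valid_square_formula reach2_far_R)/square_free_far_R.
have /(valid_square_formula (reach2_far_Rn ord0)) := H _ valid_R.
by apply; do 4 eexists; apply: square_far_Rn.
Qed.
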